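(* Let $\mathcal{M}=(E,\mathcal{C})$ be a loopless oriented matroid with $E=\{e_1,\dots,e_m\}$ ordered $e_1\prec\cdots\prec e_m$, and let $1\le k\le m$. For every $(N_{k-1},A_{k-1})\in\mathscr{N}_{k-1}$, the pair $\psi_k(N_{k-1},A_{k-1})$ belongs to $\mathscr{N}_k$; i.e. $\psi_k:\mathscr{N}_{k-1}\to\mathscr{N}_k$ is well-defined.
   Context: A signed subset of a finite set $E$ is a pair $X=(X^+,X^-)$ of disjoint subsets; support $\underline{X}=X^+\cup X^-$, $-X=(X^-,X^+)$. An oriented matroid $\mathcal{M}=(E,\mathcal{C})$: a collection $\mathcal{C}$ of signed subsets with (C1) empty signed set not in $\mathcal{C}$; (C2) $\mathcal{C}=-\mathcal{C}$; (C3) $\underline{X}\subseteq\underline{Y}$ for $X,Y\in\mathcal{C}$ implies $X=\pm Y$; (C4) for $X,Y\in\mathcal{C}$, $X\neq\pm Y$, $e\in X^+\cap Y^-$ there is $Z\in\mathcal{C}$ with $Z^+\subseteq X^+\cup Y^+-\{e\}$, $Z^-\subseteq X^-\cup Y^--\{e\}$. Underlying matroid $\underline{\mathcal{M}}$: circuits $\underline{X}$, $X\in\mathcal{C}$; loopless means no one-element circuit. Positive circuit: $X^-=\emptyset$; acyclic: no positive circuit. Reorientation ${}_{-A}\mathcal{M}$ ($A\subseteq E$): signed circuits ${}_{-A}X=((X^+-A)\cup(X^-\cap A),(X^--A)\cup(X^+\cap A))$; ${}_{-e}={}_{-\{e\}}$. Deletion $\mathcal{M}\backslash X$ on $E-X$: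 signed circuits $Y\in\mathcal{C}$ with $\underline{Y}\subseteq E-X$. Contraction $\mathcal{M}/X$ on $E-X$: support-minimal nonempty members of $\{(Y^+-X,Y^--X):Y\in\mathcal{C},\underline{Y}-X\ne\emptyset\}$. Broken circuit: circuit of $\underline{\mathcal{M}}$ minus its $\prec$-maximal element; $\mathrm{NBC}(\underline{\mathcal{M}})$: subsets of $E$ containing no broken circuit. $E_k=\{e_1,\dots,e_k\}$; for $N_k\subseteq E_k$, $N_k^c=E_k-N_k$. $\mathscr{N}_k$ is the set of pairs $(N_k,A_k)$ with $N_k\subseteq E_k$, $A_k\subseteq E-E_k$, $N_k\in\mathrm{NBC}(\underline{\mathcal{M}})$, and $\mathcal{M}_k:={}_{-A_k}(\mathcal{M}\backslash N_k^c/N_k)$ acyclic. For $(N_{k-1},A_{k-1})\in\mathscr{N}_{k-1}$ with $\mathcal{M}_{k-1}={}_{-A_{k-1}}(\mathcal{M}\backslash N_{k-1}^c/N_{k-1})$: $\psi_k(N_{k-1},A_{k-1})=(N_{k-1}\cup\{e_k\},A_{k-1})$ if $e_k\notin A_{k-1}$ and ${}_{-e_k}\mathcal{M}_{k-1}$ is acyclic; $=(N_{k-1},A_{k-1})$ if $e_k\notin A_{k-1}$ and ${}_{-e_k}\mathcal{M}_{k-1}$ is not acyclic; $=(N_{k-1},A_{k-1}-\{e_k\})$ if $e_k\in A_{k-1}$. *)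

(* Ground set E = {e_1,...,e_m} is modelled as 'I_m, with
   e_(i+1) the ordinal i; the order e_1 < ... < e_m is the index order. *)
From mathcomp Require Import all_boot.
Set Implicit Arguments. Unset Strict Implicit. Unset Printing Implicit Defensive.

Section OM.
Variable m : nat.

(* signed subsets of E: pairs (X^+, X^-) *)
Definition sset := ({set 'I_m} * {set 'I_m})%type.

Definition supp (X : sset) : {set 'I_m} := X.1 :|: X.2.
Definition sopp (X : sset) : sset := (X.2, X.1).

Definition oriented_matroid (C : {set sset}) : Prop :=
  (forall X, X \in C -> [disjoint X.1 & X.2]) /\
  ((set0, set0) \notin C) /\
  (forall X, X \in C -> sopp X \in C) /\
  (forall X Y, X \in C -> Y \in C -> supp X \subset supp Y ->
      X = Y \/ X = sopp Y) /\
  (forall X Y e, X \in C -> Y \in C -> X <> Y -> X <> sopp Y ->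
      e \in X.1 :&: Y.2 ->
      exists2 Z, Z \in C &
        Z.1 \subset (X.1 :|: Y.1) :\ e /\ Z.2 \subset (X.2 :|: Y.2) :\ e).

Definition loopless (C : {set sset}) : Prop :=
  forall X, X \in C -> #|supp X| <> 1.

Definition acyclic (C : {set sset}) : bool :=
  [forall X in C, X.2 != set0].

Definition reor_sset (A : {set 'I_m}) (X : sset) : sset :=
  ((X.1 :\: A) :|: (X.2 :&: A), (X.2 :\: A) :|: (X.1 :&: A)).
Definition reor (A : {set 'I_m}) (C : {set sset}) : {set sset} :=
  [set reor_sset A X | X in C].

Definition del (C : {set sset}) (X : {set 'I_m}) : {set sset} :=
  [set Y in C | supp Y \subset ~: X].

Definition contr_cands (C : {set sset}) (X : {set 'I_m}) : {set sset} :=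
  [set (Y.1 :\: X, Y.2 :\: X) | Y in C & supp Y :\: X != set0].
Definition contr (C : {set sset}) (X : {set 'I_m}) : {set sset} :=
  [set Z in contr_cands C X | supp Z != set0 &
     [forall W in contr_cands C X, ~~ (supp W \proper supp Z)]].

Definition broken_circuit (C : {set sset}) (B : {set 'I_m}) : Prop :=
  exists2 X, X \in C &
    exists2 e, e \in supp X &
      (forall f, f \in supp X -> f <= e) /\ B = supp X :\ e.
Definition NBC (C : {set sset}) (N : {set 'I_m}) : Prop :=
  forall B, broken_circuit C B -> ~ (B \subset N).

(* E_j = {e_1, ..., e_j} *)
Definition Eset (j : nat) : {set 'I_m} := [set i : 'I_m | i < j].

Definition Mk (C : {set sset}) (j : nat) (N A : {set 'I_m}) : {set sset} :=
  reor A (contr (del C (Eset j :\: N)) N).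

Definition inNk (C : {set sset}) (j : nat) (N A : {set 'I_m}) : Prop :=
  N \subset Eset j /\ A \subset ~: Eset j /\ NBC C N /\ acyclic (Mk C j N A).

(* psi_k, where ek : 'I_m is the element e_k (so k = ek + 1 and
   E_{k-1} = Eset ek) *)
Definition psi (C : {set sset}) (ek : 'I_m) (N A : {set 'I_m})
  : {set 'I_m} * {set 'I_m} :=
  if ek \notin A then
    if acyclic (reor [set ek] (Mk C ek N A)) then (ek |: N, A) else (N, A)
  else (N, A :\ ek).

End OM.

(* Write M_{k-1} = _{-A}(M \ D / N) with D = E_{k-1} - N.  When N is kept, only
   the deletion grows (by e_k): the circuits of the new contraction are circuits
   of M \ D / N avoiding e_k, on which the old and new reorientations agree, so
   acyclicity survives.  When e_k joins N, both M_{k-1} and _{-e_k}M_{k-1} are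
   acyclic, so no circuit of M_{k-1} has its negative part inside {e_k}, nor its
   support inside a pair {e_k, f}.  A broken circuit in N + e_k would contract to
   a circuit of M \ D / N supported on {e_k, its maximum}, so N + e_k is NBC,
   hence independent.  Then circuit elimination shows that every circuit of
   M \ D / (N + e_k) is W - e_k for a circuit W of M \ D / N, and reorienting A
   cannot make it positive. *)

From mathcomp Require Import all_boot.
Set Implicit Arguments. Unset Strict Implicit. Unset Printing Implicit Defensive.

Section OrientedMatroidMinors.
Variable m : nat.
Implicit Types (C M : {set sset m}) (X Y Z V W R : sset m) (A D N T : {set 'I_m}).

Definition sign_disjoint C := forall X, X \in C -> [disjoint X.1 & X.2].
Definition sopp_closed C := forall X, X \in C -> sopp X \in C.
Definition elimination C := forall X Y e, X \in C -> Y \in C -> X <> Y ->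
  X <> sopp Y -> e \in X.1 :&: Y.2 ->
  exists2 Z, Z \in C &
    Z.1 \subset (X.1 :|: Y.1) :\ e /\ Z.2 \subset (X.2 :|: Y.2) :\ e.
Definition independent C T := forall X, X \in C -> ~ supp X \subset T.

Definition ssetD X T : sset m := (X.1 :\: T, X.2 :\: T).
Definition sep X Y : {set 'I_m} := (X.1 :&: Y.2) :|: (X.2 :&: Y.1).

Lemma supp_sopp X : supp (sopp X) = supp X.
Proof. by rewrite /supp setUC. Qed.

Lemma supp_ssetD X T : supp (ssetD X T) = supp X :\: T.
Proof. by rewrite /supp setDUl. Qed.

Lemma ssetDDl X T T' : ssetD (ssetD X T) T' = ssetD X (T :|: T').
Proof. by rewrite /ssetD !setDDl. Qed.

Lemma sep_ssetD X Y T : sep (ssetD X T) (ssetD Y T) = sep X Y :\: T.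
Proof. by apply/setP => x; rewrite !inE; case: (x \in T); rewrite ?andbF. Qed.

Lemma sep_sub_supp X Y : sep X Y \subset supp X.
Proof. by apply/subsetP => x; rewrite !inE => /orP[] /andP[-> _]; rewrite ?orbT. Qed.

Lemma disjoint_sign X x : [disjoint X.1 & X.2] -> (x \in X.1) && (x \in X.2) = false.
Proof. by move=> dX; apply/negbTE/andP => -[/(disjointFr dX) ->]. Qed.

Lemma eq_sset_sep0 X Y : [disjoint X.1 & X.2] -> [disjoint Y.1 & Y.2] ->
  supp X = supp Y -> sep X Y = set0 -> X = Y.
Proof.
move=> dX dY /setP suppXY /setP sep0.
have signs_eq x : ((x \in X.1) = (x \in Y.1)) * ((x \in X.2) = (x \in Y.2)).
  move: (suppXY x) (sep0 x) (disjoint_sign x dX) (disjoint_sign x dY); rewrite !inE.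
  by case: (x \in X.1); case: (x \in X.2); case: (x \in Y.1); case: (x \in Y.2).
case: X Y signs_eq {dX dY suppXY sep0} => X1 X2 [Y1 Y2] /= signs_eq.
by congr pair; apply/setP => x; rewrite signs_eq.
Qed.

Lemma supp_reor A X : supp (reor_sset A X) = supp X.
Proof.
apply/setP => x; rewrite /supp !inE.
by case: (x \in X.1); case: (x \in X.2); case: (x \in A).
Qed.

Lemma reor_ssetD A X T : reor_sset A (ssetD X T) = ssetD (reor_sset A X) T.
Proof.
by congr pair; apply/setP => x; rewrite !inE; case: (x \in T); rewrite ?andbF.
Qed.

Lemma eq_reor_sset A A' X : {in supp X, forall x, (x \in A) = (x \in A')} ->
  reor_sset A X = reor_sset A' X.
Proof.
move=> eqA; congr pair; apply/setP => x; rewrite !inE;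
  have [/eqA -> // | ] := boolP (x \in supp X);
  by rewrite /supp !inE negb_or => /andP[/negPf -> /negPf ->]; rewrite !andbF.
Qed.

Lemma disjoint_reor A X : [disjoint X.1 & X.2] ->
  [disjoint (reor_sset A X).1 & (reor_sset A X).2].
Proof.
move=> dX; rewrite -setI_eq0; apply/eqP/setP => x; move: (disjoint_sign x dX).
by rewrite !inE; case: (x \in X.1); case: (x \in X.2); case: (x \in A).
Qed.

Lemma disjoint_ssetD X T : [disjoint X.1 & X.2] ->
  [disjoint (ssetD X T).1 & (ssetD X T).2].
Proof. by move=> dX; apply: disjointWl (subsetDl _ T) (disjointWr (subsetDl _ T) dX). Qed.

Lemma cands_ssetD C T Y : Y \in C -> supp Y :\: T != set0 ->
  ssetD Y T \in contr_cands C T.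
Proof. by move=> YC YT; apply/imsetP; exists Y; rewrite // inE YC. Qed.

Lemma contr_candsP C T V : V \in contr_cands C T -> exists2 Y, Y \in C & V = ssetD Y T.
Proof. by case/imsetP => Y /setIdP[YC _] ->; exists Y. Qed.

Lemma supp_cand_neq0 C T V : V \in contr_cands C T -> supp V != set0.
Proof. by case/imsetP => Y /setIdP[_ YT] ->; rewrite supp_ssetD. Qed.

Lemma contr_cand C T Z : Z \in contr C T -> Z \in contr_cands C T.
Proof. by case/setIdP. Qed.

Lemma contr_min C T Z V : Z \in contr C T -> V \in contr_cands C T ->
  supp V \subset supp Z -> supp V = supp Z.
Proof.
case/setIdP => _ /andP[_ /forall_inP minZ] /minZ.
by rewrite properEneq => /nandP[/negbNE/eqP // | /negP].
Qed.

Lemma contr_of_min C T Z : Z \in contr_cands C T ->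
  (forall V, V \in contr_cands C T -> supp V \subset supp Z -> supp V = supp Z) ->
  Z \in contr C T.
Proof.
move=> Zcand minZ; rewrite inE Zcand (supp_cand_neq0 Zcand) /=.
apply/forall_inP => V Vcand; rewrite properEneq negb_and.
by case: (boolP (supp V \subset supp Z)) => [/(minZ V Vcand) -> | ]; rewrite ?eqxx ?orbT.
Qed.

Lemma contr_sub_cand C T V : V \in contr_cands C T ->
  exists2 W, W \in contr C T & supp W \subset supp V.
Proof.
pose P W := (W \in contr_cands C T) && (supp W \subset supp V).
move=> Vcand; have PV : P V by rewrite /P Vcand subxx.
case: (arg_minnP (fun W => #|supp W|) PV) => W /andP[Wcand WV] minW.
exists W => //; apply: contr_of_min => // U Ucand UW.
by apply/eqP; rewrite eqEcard UW minW // /P Ucand (subset_trans UW WV).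
Qed.

Lemma sign_disjoint_del C D : sign_disjoint C -> sign_disjoint (del C D).
Proof. by move=> Cdisj X /setIdP[XC _]; apply: Cdisj. Qed.

Lemma sign_disjoint_contr C T : sign_disjoint C -> sign_disjoint (contr C T).
Proof.
move=> Cdisj Z /contr_cand/contr_candsP[Y YC ->].
exact/disjoint_ssetD/Cdisj.
Qed.

Lemma sign_disjoint_reor C A : sign_disjoint C -> sign_disjoint (reor A C).
Proof. by move=> Cdisj _ /imsetP[X XC ->]; apply/disjoint_reor/Cdisj. Qed.

Lemma sopp_closed_del C D : sopp_closed C -> sopp_closed (del C D).
Proof. by move=> Copp X; rewrite !inE supp_sopp => /andP[/Copp -> ->]. Qed.

Lemma sopp_cands C T V : sopp_closed C -> V \in contr_cands C T ->
  sopp V \in contr_cands C T.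
Proof.
move=> Copp /imsetP[Y /setIdP[YC YT] ->].
by rewrite -[sopp _]/(ssetD (sopp Y) T) cands_ssetD ?supp_sopp ?Copp.
Qed.

Lemma sopp_closed_contr C T : sopp_closed C -> sopp_closed (contr C T).
Proof.
move=> Copp Z Zmin; apply: contr_of_min => [|V Vcand].
  exact/sopp_cands/contr_cand.
by rewrite supp_sopp; apply: contr_min Zmin Vcand.
Qed.

Lemma sopp_closed_reor C A : sopp_closed C -> sopp_closed (reor A C).
Proof.
by move=> Copp _ /imsetP[X XC ->]; apply/imsetP; exists (sopp X); rewrite ?Copp.
Qed.

Lemma supp_elim X Y Z y : Z.1 \subset (X.1 :|: Y.1) :\ y ->
  Z.2 \subset (X.2 :|: Y.2) :\ y -> supp Z \subset (supp X :|: supp Y) :\ y.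
Proof.
move=> sub1 sub2; apply/subsetP => x /setUP[/(subsetP sub1) | /(subsetP sub2)];
  by rewrite /supp !inE => /andP[-> /orP[] ->]; rewrite ?orbT.
Qed.

Lemma elimination_sep C X Y y : elimination C -> X \in C -> Y \in C ->
  supp X != supp Y -> y \in sep X Y ->
  exists2 Z, Z \in C & supp Z \subset (supp X :|: supp Y) :\ y.
Proof.
move=> Celim XC YC.
have elimXY X' Y' : X' \in C -> Y' \in C -> supp X' != supp Y' ->
    y \in X'.1 :&: Y'.2 ->
    exists2 Z, Z \in C & supp Z \subset (supp X' :|: supp Y') :\ y.
  move=> X'C Y'C neqX'Y' yX'Y'.
  have [E | E | Z ZC [sub1 sub2]] := Celim _ _ _ X'C Y'C _ _ yX'Y'.
  - by rewrite E eqxx in neqX'Y'.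
  - by rewrite E supp_sopp eqxx in neqX'Y'.
  - by exists Z; last exact: supp_elim.
move=> neqXY /setUP[yXY | ]; first exact: elimXY.
rewrite setIC => yYX; have neqYX : supp Y != supp X by rewrite eq_sym.
by have [Z ZC] := elimXY Y X YC XC neqYX yYX; rewrite setUC; exists Z.
Qed.

Lemma elimination_del C D : elimination C -> elimination (del C D).
Proof.
move=> Celim X Y y /setIdP[XC XD] /setIdP[YC YD] neqXY neqXY' yXY.
have [Z ZC [sub1 sub2]] := Celim _ _ _ XC YC neqXY neqXY' yXY.
exists Z => //; rewrite inE ZC.
apply: subset_trans (supp_elim sub1 sub2) (subset_trans (subD1set _ _) _).
by rewrite subUset XD YD.
Qed.

Lemma acyclic_reor1_neg M e R : sign_disjoint M -> acyclic M ->
  acyclic (reor [set e] M) -> R \in M -> ~~ (R.2 \subset [set e]).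
Proof.
move=> Mdisj /forall_inP acyc /forall_inP acyc_e RM; apply/negP => Rneg.
have /set0Pn[x xR2] := acyc R RM.
have eR2 : e \in R.2 by move: (subsetP Rneg x xR2); rewrite inE => /eqP <-.
have /acyc_e : reor_sset [set e] R \in reor [set e] M by apply: imset_f.
rewrite /= setU_eq0 setD_eq0 Rneg /= setIC setI_eq0 disjoints1.
by rewrite (disjointFl (Mdisj R RM) eR2).
Qed.

Lemma acyclic_reor1_pair M e f R : sopp_closed M -> sign_disjoint M ->
  acyclic M -> acyclic (reor [set e] M) -> R \in M ->
  ~~ (supp R \subset [set e; f]).
Proof.
move=> Mopp Mdisj acyc acyc_e RM; apply/negP => Rsub.
wlog fR2 : R RM Rsub / f \notin R.2.
  move=> wlogH; have [fR2 | ] := boolP (f \in R.2); last exact: wlogH.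
  apply: (wlogH (sopp R)); rewrite ?supp_sopp ?Mopp //=.
  by rewrite (disjointFl (Mdisj R RM) fR2).
have /negP := acyclic_reor1_neg Mdisj acyc acyc_e RM; apply.
apply/subsetP => x xR2; have /(subsetP Rsub) : x \in supp R by rewrite inE xR2 orbT.
by rewrite !inE => /orP[// | /eqP xf]; rewrite -xf xR2 in fR2.
Qed.

Section ContractOneMore.
Variable C : {set sset m}.
Hypotheses (Cdisj : sign_disjoint C) (Celim : elimination C).

Lemma contr_setU1 N e Z : independent C (e |: N) -> Z \in contr C (e |: N) ->
  exists2 W, W \in contr C N & ssetD W [set e] = Z.
Proof.
set T := e |: N => indT Zmin.
have NT : N \subset T := subsetUr _ _.
have candT Y : Y \in C -> ssetD Y T \in contr_cands C T.
  by move=> YC; rewrite cands_ssetD // setD_eq0; apply/negP/indT.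
have [Y YC ZE] := contr_candsP (contr_cand Zmin).
have suppZ : supp Z = supp Y :\: T by rewrite ZE supp_ssetD.
have YNcand : ssetD Y N \in contr_cands C N.
  by rewrite cands_ssetD // setD_eq0; apply/negP => /subset_trans/(_ NT); apply: indT.
have [W Wmin WY] := contr_sub_cand YNcand.
have [Y' Y'C WE] := contr_candsP (contr_cand Wmin).
rewrite WE !supp_ssetD in WY.
have [eqY | neqY] := eqVneq (supp Y') (supp Y).
  exists (ssetD Y N); last by rewrite ZE ssetDDl setUC.
  apply: contr_of_min => // V Vcand.
  have -> : supp (ssetD Y N) = supp W by rewrite WE !supp_ssetD eqY.
  exact: contr_min Wmin Vcand.
exists W => //; rewrite WE ssetDDl setUC -/T.
have suppY' : supp (ssetD Y' T) = supp Z.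
  apply: contr_min Zmin (candT Y' Y'C) _.
  have DNT (S : {set 'I_m}) : S :\: T = S :\: N :\: T by rewrite setDDl (setUidPr NT).
  by rewrite suppZ supp_ssetD (DNT (supp Y')) (DNT (supp Y)) setSD.
(* A sign conflict y between Y' and Y would be eliminated into a candidate
   strictly inside supp Z. *)
apply: eq_sset_sep0 => //; rewrite ?ZE; try exact/disjoint_ssetD/Cdisj.
apply/eqP/set0Pn => -[y]; rewrite sep_ssetD => /setDP[ysep yT].
have [Z' Z'C Z'sub] := elimination_sep Celim Y'C YC neqY ysep.
have yZ : y \in supp Z.
  by rewrite -suppY' supp_ssetD inE yT (subsetP (sep_sub_supp _ _) _ ysep).
have : supp (ssetD Z' T) = supp Z.
  apply: contr_min Zmin (candT Z' Z'C) _; rewrite supp_ssetD.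
  apply/subsetP => x /setDP[/(subsetP Z'sub)/setD1P[_ /setUP xYY'] xT].
  by case: xYY' => xY; [rewrite -suppY' supp_ssetD | rewrite suppZ]; rewrite inE xT xY.
move/setP/(_ y); rewrite yZ supp_ssetD inE => /andP[_ /(subsetP Z'sub)].
by rewrite !inE eqxx.
Qed.

Lemma acyclic_contr_setU1 N A e : independent C (e |: N) ->
  acyclic (reor A (contr C N)) -> acyclic (reor [set e] (reor A (contr C N))) ->
  acyclic (reor A (contr C (e |: N))).
Proof.
move=> indT acyc acyc_e; apply/forall_inP => _ /imsetP[Z Zmin ->].
have [W Wmin <-] := contr_setU1 indT Zmin.
rewrite reor_ssetD /= setD_eq0.
apply: acyclic_reor1_neg acyc acyc_e (imset_f _ Wmin).
exact/sign_disjoint_reor/sign_disjoint_contr.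
Qed.

End ContractOneMore.

Lemma NBC_independent C N : (set0, set0) \notin C -> NBC C N -> independent C N.
Proof.
move=> C0 NN X XC XN.
have /set0Pn[x xX] : supp X != set0.
  apply: contraNneq C0 => /eqP; rewrite setU_eq0 => /andP[/eqP X1 /eqP X2].
  by rewrite [X]surjective_pairing X1 X2 in XC.
have [e0 e0X e0max] := arg_maxnP (fun i : 'I_m => val i) xX.
apply: (NN (supp X :\ e0)); last exact: subset_trans (subD1set _ _) XN.
by exists X => //; exists e0.
Qed.

Lemma contr_delS C D D' N Z : D \subset D' -> [disjoint N & D'] ->
  Z \in contr (del C D') N -> Z \in contr (del C D) N /\ supp Z \subset ~: D'.
Proof.
move=> DD' NdD' Zmin.
have [Y /setIdP[YC YD'] ZE] := contr_candsP (contr_cand Zmin).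
have ZD' : supp Z \subset ~: D'.
  by rewrite ZE supp_ssetD (subset_trans (subsetDl _ _) YD').
split => //; apply: contr_of_min => [|V Vcand VZ].
  have Zne := supp_cand_neq0 (contr_cand Zmin); rewrite ZE supp_ssetD in Zne.
  by rewrite ZE cands_ssetD // inE YC (subset_trans YD') // setCS.
suff VD' : V \in contr_cands (del C D') N by apply: contr_min Zmin VD' VZ.
have [Y' /setIdP[Y'C _] VE] := contr_candsP Vcand.
have Vne := supp_cand_neq0 Vcand; rewrite VE supp_ssetD in Vne.
rewrite VE cands_ssetD // inE Y'C /=; apply/subsetP => x xY'; rewrite inE.
have [xN | xN] := boolP (x \in N); first by rewrite (disjointFr NdD' xN).
by rewrite -in_setC (subsetP ZD') // (subsetP VZ) // VE supp_ssetD inE xN.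
Qed.

Lemma acyclic_contr_delS C D D' N A A' : D \subset D' -> [disjoint N & D'] ->
  A' :\: D' = A :\: D' -> acyclic (reor A (contr (del C D) N)) ->
  acyclic (reor A' (contr (del C D') N)).
Proof.
move=> DD' NdD' AA' /forall_inP acyc; apply/forall_inP => _ /imsetP[Z Zmin ->].
have [ZD ZD'] := contr_delS DD' NdD' Zmin.
rewrite (@eq_reor_sset A' A) ?acyc ?imset_f // => x /(subsetP ZD').
by rewrite inE => xD'; move/setP/(_ x): AA'; rewrite !inE xD'.
Qed.

Lemma NBC_setU1 C D N A (e : 'I_m) : sopp_closed C -> sign_disjoint C ->
  D \subset Eset m e -> [disjoint N & D] -> NBC C N ->
  acyclic (reor A (contr (del C D) N)) ->
  acyclic (reor [set e] (reor A (contr (del C D) N))) -> NBC C (e |: N).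
Proof.
move=> Copp Cdisj DE NdD NN acyc acyc_e _ [X XC [e0 e0X [e0max ->]]] Bsub.
have /subsetPn[x xB xN] : ~~ (supp X :\ e0 \subset N).
  by apply/negP; apply: NN; exists X => //; exists e0.
have xe : x = e.
  by move: (subsetP Bsub x xB); rewrite in_setU1 (negPf xN) orbF => /eqP.
subst x; have /setD1P[_ eX] := xB.
have XN : supp X :\: N \subset [set e; e0].
  apply/subsetP => x /setDP[xX xN']; rewrite !inE.
  have [_ | xe0] := eqVneq x e0; first by rewrite orbT.
  move: (subsetP Bsub x); rewrite in_setD1 xe0 xX in_setU1 (negPf xN') orbF.
  by move=> /(_ isT) ->.
have XD : supp X \subset ~: D.
  apply/subsetP => x xX; rewrite inE.
  have [xN' | xN'] := boolP (x \in N); first by rewrite (disjointFr NdD xN').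
  have : x \in [set e; e0] by apply: (subsetP XN); rewrite inE xN' xX.
  rewrite !inE => /orP[] /eqP ->; apply/negP => /(subsetP DE).
    by rewrite inE ltnn.
  by rewrite inE ltnNge e0max.
have Xcand : ssetD X N \in contr_cands (del C D) N.
  by rewrite cands_ssetD ?inE ?XC //; apply/set0Pn; exists e; rewrite inE xN eX.
have [W Wmin WX] := contr_sub_cand Xcand.
have Mopp : sopp_closed (reor A (contr (del C D) N)).
  exact/sopp_closed_reor/sopp_closed_contr/sopp_closed_del.
have Mdisj : sign_disjoint (reor A (contr (del C D) N)).
  exact/sign_disjoint_reor/sign_disjoint_contr/sign_disjoint_del.
have /negP := acyclic_reor1_pair e0 Mopp Mdisj acyc acyc_e (imset_f _ Wmin); apply.
by rewrite supp_reor (subset_trans WX) // supp_ssetD.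
Qed.

Lemma Eset_S (i : 'I_m) : Eset m i.+1 = i |: Eset m i.
Proof. by apply/setP => x; rewrite !inE ltnS leq_eqVlt. Qed.

End OrientedMatroidMinors.

Theorem lemma2p3 (m : nat) (C : {set sset m}) (ek : 'I_m) :
  oriented_matroid C -> loopless C ->
  forall N A : {set 'I_m},
    inNk C ek N A ->
    inNk C ek.+1 (psi C ek N A).1 (psi C ek N A).2.
Proof.
move=> [Cdisj [C0 [Copp [_ Celim]]]] _ N A [NE [AE [NN acyc]]].
have ekN : ek \notin N by apply: contra (subsetP NE ek) _; rewrite inE ltnn.
set D := Eset m ek :\: N; set D' := Eset m ek.+1 :\: N.
have NdD : [disjoint N & D] by rewrite /D -setI_eq0 setDE setICA setICr setI0.
have NdD' : [disjoint N & D'] by rewrite /D' -setI_eq0 setDE setICA setICr setI0.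
have DD' : D \subset D' by rewrite setSD // Eset_S subsetUr.
have NE' : N \subset Eset m ek.+1 by rewrite Eset_S (subset_trans NE) ?subsetUr.
have CE' : ~: Eset m ek.+1 = ~: Eset m ek :\ ek by rewrite Eset_S setCU setIC -setDE.
rewrite /psi; case: ifPn => ekA /=; last first.
  split => //; split; first by rewrite CE' subsetD1 setD11 (subset_trans (subD1set _ _)).
  split => //; apply: acyclic_contr_delS DD' NdD' _ acyc.
  by rewrite setDDl (setUidPr _) // sub1set inE ekN inE ltnSn.
have AE' : A \subset ~: Eset m ek.+1 by rewrite CE' subsetD1 AE.
case: ifPn => acyc_e /=; last first.
  by do !split => //; apply: acyclic_contr_delS DD' NdD' _ acyc.
have NN' : NBC C (ek |: N).
  exact: NBC_setU1 Copp Cdisj (subsetDl _ _) NdD NN acyc acyc_e.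
split; first by rewrite Eset_S setUS.
do 2!split => //; rewrite /Mk.
have -> : Eset m ek.+1 :\: (ek |: N) = D.
  by apply/setP => x; rewrite Eset_S !inE; case: eqVneq => [-> | _]; rewrite ?ltnn ?andbF.
apply: acyclic_contr_setU1 acyc acyc_e.
- exact: sign_disjoint_del.
- exact: elimination_del.
- by move=> X /setIdP[XC _]; apply: NBC_independent C0 NN' X XC.
Qed.
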